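(* In the abstract boundary problem setting with an invertible reference operator described in the context, the map $\Gamma_0\oplus\bm\Gamma_1:\mathcal D(T^* )\to K'\oplus K$ is surjective.
   Context: Inner products are linear in the first argument and conjugate-linear in the second. Let $H_0$ be a separable Hilbert space with inner product $\langle\cdot,\cdot\rangle$, let $T$ be a closed densely defined symmetric operator in $H_0$ with adjoint $T^*$, and equip $\mathcal D(T^* )$ with the graph norm. Let $H_1\subset H_0$ be a dense subspace which is a Hilbert space in its own right with bounded inclusion $H_1\to H_0$. Let $K^\partial$ be a separable Hilbert space with inner product $\langle\cdot,\cdot\rangle_\partial$ and $K\subset K^\partial$ a dense subspace which is a Hilbert space in its own right with bounded inclusion. Let $K'$ be the space of continuous anti-linear functionals on $K$ (a Hilbert space with the dual norm); $K^\partial$ is regarded as a dense subspace of $K'$ via $y\mapsto(x\mapsto\langle y,x\rangle_\partial)$, so $K\subset K^\partial\subset K'$. For $y\in K'$, $x\in K$ put $\langle y,x\rangle_{K',K}=y(x)$ and $\langle x,y\rangle_{K,K'}=\overline{y(x)}$; these agree with $\langle\cdot,\cdot\rangle_\partial$ when $y\in K^\partial$. Standing assumptions: $H_1\subset\mathcal D(T^* )$ and $H_1$ is dense in $\mathcal D(T^* )$ in the graph norm; $T^*|_{H_1}:H_1\to H_0$ is bounded; $\gamma_0,\gamma_1:H_1\to K$ are bounded linear operators such that $\gamma=\gamma_0\oplus\gamma_1:H_1\to K\oplus K$ is surjective; $\operatorname{Ker}\gamma$ is dense in $H_0$ and $\mathcal D(T)=\operatorname{Ker}\gamma$; and the Lagrange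 identity $\langle T^*u,v\rangle-\langle u,T^*v\rangle=\langle\gamma_1u,\gamma_0v\rangle_\partial-\langle\gamma_0u,\gamma_1v\rangle_\partial$ holds for all $u,v\in H_1$. $\Gamma_0,\Gamma_1:\mathcal D(T^* )\to K'$ denote the (existing, unique) continuous extensions of $\gamma_0,\gamma_1$; they satisfy $\langle T^*u,v\rangle-\langle u,T^*v\rangle=\langle\Gamma_1u,\Gamma_0v\rangle_{K',K}-\langle\Gamma_0u,\Gamma_1v\rangle_{K',K}$ for $u\in\mathcal D(T^* )$, $v\in H_1$. Moreover $A$ is a self-adjoint operator in $H_0$ with $T\subset A\subset T^*$, $\mathcal D(A)=\operatorname{Ker}\gamma_0$ (so $\mathcal D(A)\subset H_1$), and $A$ has a bounded everywhere defined inverse. Then $\mathcal D(T^* )=\mathcal D(A)\dotplus\operatorname{Ker}T^*$ topologically, with projections $p=A^{-1}T^*$ onto $\mathcal D(A)$ and $k=1-p$ onto $\operatorname{Ker}T^*$, and $\Gamma_0$ restricts to a topological isomorphism $\operatorname{Ker}T^*\to K'$; let $\bm\gamma(0):K'\to\operatorname{Ker}T^*$ be its inverse, $M(0)=\Gamma_1\circ\bm\gamma(0):K'\to K'$, and define the reduced boundary operator $\bm\Gamma_1=\Gamma_1-M(0)\circ\Gamma_0:\mathcal D(T^* )\to K'$; its image lies in $K$. *)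

From HB Require Import structures.
From mathcomp Require Import all_boot all_order all_algebra.
From mathcomp Require Import reals.
From mathcomp Require Import complex.
Set Implicit Arguments. Unset Strict Implicit. Unset Printing Implicit Defensive.
Import Order.TTheory GRing.Theory Num.Theory.
Local Open Scope ring_scope.

Section Hilbert.
Variable R : realType.
Local Notation C := R[i].

Definition inner_product (V : lmodType C) (ip : V -> V -> C) : Prop :=
  [/\ (forall (a : C) (x y z : V), ip (a *: x + y) z = a * ip x z + ip y z),
      (forall x y : V, ip y x = conjc (ip x y)),
      (forall x : V, 0 <= complex.Re (ip x x)) &
      (forall x : V, ip x x = 0 -> x = 0)].

Definition hnorm (V : lmodType C) (ip : V -> V -> C) (x : V) : R :=
  Num.sqrt (complex.Re (ip x x)).

Definition converges (V : lmodType C) (ip : V -> V -> C) (u : nat -> V) (l : V) :=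
  forall e : R, 0 < e -> exists N, forall n, (N <= n)%N -> hnorm ip (u n - l) < e.

Definition cauchy (V : lmodType C) (ip : V -> V -> C) (u : nat -> V) :=
  forall e : R, 0 < e -> exists N, forall m n, (N <= m)%N -> (N <= n)%N ->
    hnorm ip (u m - u n) < e.

Definition hilbert (V : lmodType C) (ip : V -> V -> C) : Prop :=
  inner_product ip /\
  forall u : nat -> V, cauchy ip u -> exists l, converges ip u l.

Definition separable (V : lmodType C) (ip : V -> V -> C) : Prop :=
  exists d : nat -> V, forall x e, 0 < e -> exists n, hnorm ip (x - d n) < e.

Definition dense_in (V : lmodType C) (ip : V -> V -> C) (D : V -> Prop) : Prop :=
  forall x e, 0 < e -> exists y, D y /\ hnorm ip (x - y) < e.

Definition subspace (V : lmodType C) (D : V -> Prop) : Prop :=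
  D 0 /\ forall (a : C) x y, D x -> D y -> D (a *: x + y).

Definition linear_on (V W : lmodType C) (D : V -> Prop) (f : V -> W) : Prop :=
  forall (a : C) x y, D x -> D y -> f (a *: x + y) = a *: f x + f y.

(** An (unbounded) operator in V is a pair (D, f) : domain, and a function
    whose values outside D are irrelevant. *)
Definition symmetric_op (V : lmodType C) (ip : V -> V -> C) (D : V -> Prop)
  (f : V -> V) : Prop :=
  forall u v, D u -> D v -> ip (f u) v = ip u (f v).

Definition closed_op (V : lmodType C) (ip : V -> V -> C) (D : V -> Prop)
  (f : V -> V) : Prop :=
  forall (u : nat -> V) x y, (forall n, D (u n)) -> converges ip u x ->
    converges ip (fun n => f (u n)) y -> D x /\ f x = y.

Definition is_adjoint (V : lmodType C) (ip : V -> V -> C) (D : V -> Prop)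
  (f : V -> V) (Ds : V -> Prop) (fs : V -> V) : Prop :=
  forall v w, (Ds v /\ fs v = w) <-> (forall u, D u -> ip (f u) v = ip u w).

Definition op_ext (V : lmodType C) (D1 : V -> Prop) (f1 : V -> V)
  (D2 : V -> Prop) (f2 : V -> V) : Prop :=
  forall u, D1 u -> D2 u /\ f2 u = f1 u.

Definition graph_norm (V : lmodType C) (ip : V -> V -> C) (f : V -> V) (u : V) : R :=
  Num.sqrt (hnorm ip u ^+ 2 + hnorm ip (f u) ^+ 2).

Definition bounded_map (V W : lmodType C) (ipV : V -> V -> C) (ipW : W -> W -> C)
  (f : V -> W) : Prop :=
  exists c : R, forall x, hnorm ipW (f x) <= c * hnorm ipV x.

Definition antidual (K : lmodType C) (ipK : K -> K -> C) (phi : K -> C) : Prop :=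
  (forall (a : C) x y, phi (a *: x + y) = conjc a * phi x + phi y) /\
  exists c : R, forall x, ComplexField.Normc.normc (phi x) <= c * hnorm ipK x.

End Hilbert.

(* Put B := A^-1.  Since D(A) = Ker γ0 ⊆ H1, the map Ψ := γ1 ∘ B : H0 -> K is linear,
   and the Lagrange identity gives <Ψ f, γ0 w>_∂ = <f, w> - <B f, T^* w>.  As γ0 is onto,
   Ψ has a closed graph, hence is bounded (closed graph theorem, via Baire).  For φ in K',
   f ↦ conj (φ (Ψ f)) is then a bounded linear functional on H0, and the Riesz
   representation yields z with φ (Ψ f) = <z, f>.  The Lagrange identity, extended from
   H1 to D(T^* ) by graph-norm density, shows z ∈ Ker T^* with Γ0 z = φ, and that Γ0 is
   injective on Ker T^*.  Then u := z + h, where γ0 h = 0 and γ1 h = ψ, has Γ0 u = φ and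
   bold Γ1 u = Γ1 u - Γ1 z = ψ. *)

From HB Require Import structures.
From mathcomp Require Import all_boot all_order all_algebra.
From mathcomp Require Import reals complex.
From mathcomp Require Import boolp classical_sets.
From mathcomp Require Import ring lra.
Import Order.TTheory GRing.Theory Num.Theory.
Local Open Scope ring_scope.
Set Implicit Arguments. Unset Strict Implicit. Unset Printing Implicit Defensive.

Local Notation normc := (@ComplexField.Normc.normc _).

Section InnerProduct.
Variables (R : realType) (V : lmodType R[i]) (ip : V -> V -> R[i]).
Hypothesis ip_inner : inner_product ip.
Local Notation N := (hnorm ip).

Lemma ip_linear a x y z : ip (a *: x + y) z = a * ip x z + ip y z.
Proof. by case: ip_inner. Qed.

Lemma ipC x y : ip x y = conjc (ip y x).
Proof. by case: ip_inner. Qed.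

Lemma ipxx_eq0 x : ip x x = 0 -> x = 0.
Proof. by case: ip_inner => _ _ _; apply. Qed.

Lemma ip0l z : ip 0 z = 0.
Proof.
have := ip_linear 1 0 0 z; rewrite scaler0 addr0 mul1r.
by move=> /(congr1 (fun c => c - ip 0 z)); rewrite subrr addrK.
Qed.

Lemma ipDl x y z : ip (x + y) z = ip x z + ip y z.
Proof. by rewrite -[x]scale1r ip_linear mul1r scale1r. Qed.
Lemma ipZl a x z : ip (a *: x) z = a * ip x z.
Proof. by rewrite -[a *: x]addr0 ip_linear ip0l addr0. Qed.
Lemma ipNl x z : ip (- x) z = - ip x z.
Proof. by rewrite -scaleN1r ipZl mulN1r. Qed.
Lemma ipBl x y z : ip (x - y) z = ip x z - ip y z.
Proof. by rewrite ipDl ipNl. Qed.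
Lemma ip0r z : ip z 0 = 0.
Proof. by rewrite ipC ip0l rmorph0. Qed.
Lemma ipDr x y z : ip z (x + y) = ip z x + ip z y.
Proof. by rewrite [LHS]ipC ipDl rmorphD (ipC z x) (ipC z y). Qed.
Lemma ipZr a x z : ip z (a *: x) = conjc a * ip z x.
Proof. by rewrite [LHS]ipC ipZl rmorphM (ipC z x). Qed.
Lemma ipNr x z : ip z (- x) = - ip z x.
Proof. by rewrite [LHS]ipC ipNl rmorphN (ipC z x). Qed.
Lemma ipBr x y z : ip z (x - y) = ip z x - ip z y.
Proof. by rewrite ipDr ipNr. Qed.

Lemma ipxx_real x : ip x x = (complex.Re (ip x x))%:C%C.
Proof.
have := ipC x x; case: (ip x x) => a b /= [] /eqP.
by rewrite -subr_eq0 opprK -mulr2n mulrn_eq0 /= => /eqP ->.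
Qed.

Lemma ipxx_ge0 x : 0 <= ip x x.
Proof. by rewrite ipxx_real ler0c; case: ip_inner. Qed.

Lemma ger0_conjc (c : R[i]) : 0 <= c -> conjc c = c.
Proof. by case: c => a b; rewrite lecE /= => /andP[/eqP -> _]; rewrite oppr0. Qed.

Lemma ipxx_sub_proj x y : ip y y != 0 ->
  ip (x - (ip x y / ip y y) *: y) (x - (ip x y / ip y y) *: y)
  = ip x x - `|ip x y| ^+ 2 / ip y y.
Proof.
move=> nz; rewrite ipBl !ipBr !ipZl !ipZr sqr_normc !rmorphM !fmorphV /=.
rewrite (ger0_conjc (ipxx_ge0 y)) -(ipC y x).
by field.
Qed.

Lemma cauchy_schwarz x y : `|ip x y| ^+ 2 <= ip x x * ip y y.
Proof.
have [/ipxx_eq0 ->|nz] := eqVneq (ip y y) 0.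
  by rewrite ip0r ip0l normr0 expr0n /= mulr0.
have yy_gt0 : 0 < ip y y by rewrite lt_def nz ipxx_ge0.
by have := ipxx_ge0 (x - (ip x y / ip y y) *: y); rewrite ipxx_sub_proj // subr_ge0 ler_pdivrMr.
Qed.

Lemma hnorm_ge0 x : 0 <= N x.
Proof. exact: sqrtr_ge0. Qed.

Lemma hnorm_sqr x : N x ^+ 2 = complex.Re (ip x x).
Proof. by rewrite /hnorm sqr_sqrtr //; case: ip_inner. Qed.

Lemma hnorm_sqrC x : (N x)%:C%C ^+ 2 = ip x x.
Proof. by rewrite -rmorphXn /= hnorm_sqr -ipxx_real. Qed.

Lemma normc_ge0 (z : R[i]) : 0 <= normc z.
Proof. by case: z => a b; exact: sqrtr_ge0. Qed.

Lemma normr_normc (z : R[i]) : `|z| = (normc z)%:C%C.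
Proof. by rewrite normc_def; case: z. Qed.

Lemma normc_ip_le x y : normc (ip x y) <= N x * N y.
Proof.
rewrite -(ler_pXn2r (_ : (0 < 2)%N)) ?nnegrE ?normc_ge0 ?mulr_ge0 ?hnorm_ge0 //.
rewrite -lecR rmorphXn /= -normr_normc exprMn rmorphM /= !rmorphXn /= !hnorm_sqrC.
exact: cauchy_schwarz.
Qed.

Lemma ler_hnormD x y : N (x + y) <= N x + N y.
Proof.
rewrite -(ler_pXn2r (_ : (0 < 2)%N)) ?nnegrE ?addr_ge0 ?hnorm_ge0 //.
have ReD (a b : R[i]) : complex.Re (a + b) = complex.Re a + complex.Re b by case: a; case: b.
have Re_le (z : R[i]) : complex.Re z <= normc z.
  case: z => a b /=; apply: (le_trans (ler_norm a)).
  by rewrite -sqrtr_sqr ler_wsqrtr // lerDl sqr_ge0.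
rewrite hnorm_sqr ipDl !ipDr !ReD (ipC y x) -!hnorm_sqr sqrrD.
have -> : complex.Re (conjc (ip x y)) = complex.Re (ip x y) by case: (ip x y).
have := Re_le (ip x y); have := normc_ip_le x y; lra.
Qed.

Lemma hnormZ a x : N (a *: x) = normc a * N x.
Proof.
rewrite /hnorm ipZl ipZr mulrA -sqr_normc normr_normc -rmorphXn ipxx_real -rmorphM /=.
by rewrite sqrtrM ?sqr_ge0 // sqrtr_sqr ger0_norm // normc_ge0.
Qed.

Lemma hnormZ_ge0 (r : R) x : 0 <= r -> N (r%:C%C *: x) = r * N x.
Proof.
by move=> r0; rewrite hnormZ /= expr0n /= addr0 sqrtr_sqr ger0_norm.
Qed.

Lemma hnormN x : N (- x) = N x.
Proof. by rewrite -scaleN1r hnormZ normcN ComplexField.Normc.normc1 mul1r. Qed.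

Lemma hdistC x y : N (x - y) = N (y - x).
Proof. by rewrite -hnormN opprB. Qed.

Lemma hnorm0 : N 0 = 0.
Proof. by rewrite /hnorm ip0l /= sqrtr0. Qed.

Lemma hnorm_eq0 x : N x = 0 -> x = 0.
Proof. by move=> h; apply: ipxx_eq0; rewrite -hnorm_sqrC h /= expr0n. Qed.

Lemma ler_hdist x y z : N (x - z) <= N (x - y) + N (y - z).
Proof. by have := ler_hnormD (x - y) (y - z); rewrite addrA subrK. Qed.

Lemma ler_hnormB x y : N (x - y) <= N x + N y.
Proof. by rewrite -(hnormN y); exact: ler_hnormD. Qed.

Lemma parallelogram a b : N (a + b) ^+ 2 + N (a - b) ^+ 2 = 2 * N a ^+ 2 + 2 * N b ^+ 2.
Proof.
have ReD (c d : R[i]) : complex.Re (c + d) = complex.Re c + complex.Re d by case: c; case: d.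
have ReN (c : R[i]) : complex.Re (- c) = - complex.Re c by case: c.
rewrite !hnorm_sqr !ipDl !ipDr !ipNl !ipNr !ReD !ReN; lra.
Qed.

Lemma ler_ipxx x y : N x <= N y -> ip x x <= ip y y.
Proof.
by move=> h; rewrite -!hnorm_sqrC -!rmorphXn /= lecR ler_pXn2r ?nnegrE ?hnorm_ge0.
Qed.

End InnerProduct.

Section Geometric.
Variable R : realType.

Lemma ler0_forall_gt0M (a k : R) : (forall e, 0 < e -> a <= e * k) -> a <= 0.
Proof.
move=> h; rewrite leNgt; apply/negP => a0.
have kp : 0 < `|k| + 1 by rewrite ltr_pwDr.
have t0 : 0 < a / (`|k| + 1) by rewrite divr_gt0.
have := h _ t0; have : a / (`|k| + 1) * k <= a / (`|k| + 1) * `|k|.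
  by rewrite ler_wpM2l ?ler_norm // ltW.
have : a / (`|k| + 1) * `|k| + a / (`|k| + 1) = a.
  by rewrite -[X in _ + X]mulr1 -mulrDr divfK // lt0r_neq0.
lra.
Qed.

Definition geom (eta : R) (k : nat) : R := eta / (2 ^ k)%:R.

Lemma geom_gt0 eta k : 0 < eta -> 0 < geom eta k.
Proof. by move=> e0; rewrite divr_gt0 // ltr0n expn_gt0. Qed.

Lemma geom0 eta : geom eta 0 = eta.
Proof. by rewrite /geom expn0 divr1. Qed.

Lemma geomS eta k : geom eta k.+1 = geom eta k / 2.
Proof. by rewrite /geom expnS natrM invfM mulrA mulrAC. Qed.

Lemma geom_le eta k m : 0 <= eta -> (k <= m)%N -> geom eta m <= geom eta k.
Proof.
move=> e0 km; rewrite /geom ler_wpM2l // lef_pV2 ?posrE ?ltr0n ?expn_gt0 //.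
by rewrite ler_nat leq_pexp2l.
Qed.

Lemma geom_small eta t : 0 < eta -> 0 < t ->
  exists K, forall k, (K <= k)%N -> geom eta k < t.
Proof.
move=> e0 t0; have ei : 0 <= eta / t by rewrite divr_ge0 // ltW.
exists (Num.Def.archi_bound (eta / t)) => k Kk.
apply: (le_lt_trans (geom_le (ltW e0) Kk)).
have p : 0 < (2 ^ Num.Def.archi_bound (eta / t))%:R :> R by rewrite ltr0n expn_gt0.
rewrite /geom ltr_pdivrMr // -ltr_pdivrMl // mulrC.
apply: (lt_trans (archi_boundP ei)); rewrite ltr_nat ltn_expl //.
Qed.

End Geometric.

Section Baire.
Variables (R : realType) (V : lmodType R[i]) (ip : V -> V -> R[i]).
Hypothesis ip_hilbert : hilbert ip.
Let ip_inner : inner_product ip := ip_hilbert.1.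
Local Notation N := (hnorm ip).

Lemma nested_balls_meet (u : nat -> V) (r : nat -> R) :
  (forall k, 0 < r k) -> (forall k, r k.+1 <= r k / 2) ->
  (forall k, N (u k.+1 - u k) + r k.+1 <= r k) ->
  exists x, forall k, N (x - u k) <= r k.
Proof.
move=> r_gt0 r_half r_nested.
have nested d k : N (u (k + d)%N - u k) + r (k + d)%N <= r k.
  elim: d => [|d IH]; first by rewrite addn0 subrr hnorm0 // add0r.
  rewrite addnS; have := ler_hdist ip_inner (u (k + d).+1) (u (k + d)%N) (u k).
  have := r_nested (k + d)%N; lra.
have r_geom k : r k <= geom (r 0%N) k.
  elim: k => [|k IH]; first by rewrite geom0.
  by rewrite geomS; apply: (le_trans (r_half k)); rewrite ler_wpM2r // invr_ge0 ler0n.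
have cau : cauchy ip u.
  move=> e e0; have [K hK] := geom_small (r_gt0 0%N) (divr_gt0 e0 (ltr0Sn _ 1)).
  exists K => m n Km Kn.
  have := nested (m - K)%N K; have := nested (n - K)%N K; rewrite !subnKC // => hm hn.
  have := ler_hdist ip_inner (u m) (u K) (u n); rewrite (hdistC ip_inner (u K)).
  have := r_geom K; have := hK K (leqnn K); have := r_gt0 m; have := r_gt0 n; lra.
have [x ux] := ip_hilbert.2 u cau.
exists x => k; apply/ler_addgt0Pr => e e0.
have [M hM] := ux e e0; set m := maxn M k.
have := hM m (leq_maxl _ _); have := nested (m - k)%N k; rewrite subnKC ?leq_maxr //.
have := ler_hdist ip_inner x (u m) (u k); rewrite (hdistC ip_inner x (u m)).
have := r_gt0 m; lra.
Qed.

Lemma baire_category (P : nat -> V -> Prop) : (forall f, exists n, P n f) ->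
  exists n f0 r, 0 < r /\ forall f, N (f - f0) < r -> forall e, 0 < e ->
     exists g, P n g /\ N (f - g) < e.
Proof.
move=> cover; apply: contrapT => nowhere_dense.
(* Otherwise every ball contains a smaller closed ball avoiding a given P n; nesting
   such balls produces a point outside every P n. *)
have gap n f0 r : 0 < r -> exists f, N (f - f0) < r /\
    exists2 e, 0 < e & forall g, P n g -> e <= N (f - g).
  move=> r0; apply: contrapT => nf; apply: nowhere_dense.
  exists n, f0, r; split => // f fr e e0; apply: contrapT => ng; apply: nf.
  exists f; split => //; exists e => // g Pg; rewrite leNgt; apply/negP => lt.
  by apply: ng; exists g.
have shrink (nb : nat * (V * R)) : exists b : V * R, 0 < nb.2.2 ->
    [/\ 0 < b.2, b.2 <= nb.2.2 / 2, N (b.1 - nb.2.1) + b.2 <= nb.2.2 &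
        forall g, N (g - b.1) <= b.2 -> ~ P nb.1 g].
  case: nb => n [f0 r] /=; have [r0|] := boolP (0 < r); last by exists (f0, r).
  have [f [fr [e e0 he]]] := gap n f0 r r0.
  pose m := Num.min e (r - N (f - f0)).
  have m0 : 0 < m by rewrite lt_min e0 subr_gt0.
  have me : m <= e by rewrite ge_min lexx.
  have md : m <= r - N (f - f0) by rewrite ge_min lexx orbT.
  have := hnorm_ge0 ip (f - f0).
  exists (f, m / 2) => _ /=; split; try lra.
  by move=> g hg Pg; have := he g Pg; rewrite (hdistC ip_inner); lra.
have [next hnext] := choice shrink.
pose b := fix b k := if k is k'.+1 then next (k', b k') else (0 : V, 1 : R).
have hb k : 0 < (b k).2 /\
    [/\ 0 < (b k.+1).2, (b k.+1).2 <= (b k).2 / 2,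
        N ((b k.+1).1 - (b k).1) + (b k.+1).2 <= (b k).2 &
        forall g, N (g - (b k.+1).1) <= (b k.+1).2 -> ~ P k g].
  elim: k => [|k [_ [bk_gt0 _ _ _]]]; first by split; [exact: ltr01 | exact: hnext].
  by split=> //; apply: (hnext (k.+1, b k.+1)).
have [x hx] : exists x, forall k, N (x - (b k).1) <= (b k).2.
  by apply: nested_balls_meet => k; case: (hb k) => ? [].
have [n Pn] := cover x.
by have [_ [_ _ _ avoid]] := hb n; exact: avoid x (hx n.+1) Pn.
Qed.

End Baire.

Section GeometricIncrements.
Variables (R : realType) (V : lmodType R[i]) (ip : V -> V -> R[i]).
Hypothesis ip_inner : inner_product ip.
Local Notation N := (hnorm ip).
Variables (u : nat -> V) (a : R).
Hypothesis u_incr : forall j, N (u j.+1 - u j) <= geom a j.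

Lemma hdist_geom_increments k d : N (u (k + d) - u k) <= 2 * (geom a k - geom a (k + d)).
Proof.
elim: d => [|d IH]; first by rewrite addn0 !subrr hnorm0 // mulr0.
rewrite addnS; have := ler_hdist ip_inner (u (k + d).+1) (u (k + d)%N) (u k).
have := u_incr (k + d)%N; have := geomS a (k + d)%N; lra.
Qed.

Lemma cauchy_geom_increments : 0 < a -> cauchy ip u.
Proof.
move=> a0 e e0; have [K hK] := geom_small a0 (divr_gt0 e0 (ltr0Sn _ 3)).
exists K => m n Km Kn.
have := hdist_geom_increments K (m - K); have := hdist_geom_increments K (n - K).
rewrite !subnKC // => hn hm; have := ler_hdist ip_inner (u m) (u K) (u n).
rewrite (hdistC ip_inner (u K)); have := hK K (leqnn K).
have := geom_gt0 m a0; have := geom_gt0 n a0; lra.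
Qed.

End GeometricIncrements.

Section Riesz.
Variables (R : realType) (V : lmodType R[i]) (ip : V -> V -> R[i]).
Hypothesis ip_hilbert : hilbert ip.
Let ip_inner : inner_product ip := ip_hilbert.1.
Local Notation N := (hnorm ip).

Lemma hnorm2Z x : N (2%:R *: x) = 2 * N x.
Proof. by rewrite -(rmorph_nat (real_complex R)) hnormZ_ge0 ?ler0n. Qed.

Lemma parallelogram_near_min a b (d x1 x2 : R) : 0 <= d -> 0 <= x1 -> 0 <= x2 ->
  N a <= d + x1 -> N b <= d + x2 -> 2 * d <= N (a + b) ->
  N (a - b) ^+ 2 <= 4 * d * (x1 + x2) + 2 * x1 ^+ 2 + 2 * x2 ^+ 2.
Proof.
move=> d0 x10 x20 ha hb hab; have := parallelogram ip_inner a b.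
have sq (u v : R) : 0 <= u -> u <= v -> u ^+ 2 <= v ^+ 2.
  by move=> u0 uv; rewrite ler_pXn2r ?nnegrE //; exact: le_trans uv.
have := sq _ _ (hnorm_ge0 ip a) ha; have := sq _ _ (hnorm_ge0 ip b) hb.
have := sq _ _ (mulr_ge0 (ler0n _ 2) d0) hab; nra.
Qed.

Lemma cauchy_near_min f (q : nat -> V) (d : R) : 0 <= d ->
  (forall k, N (f - q k) < d + geom 1 k) ->
  (forall m n, 2 * d <= N ((f - q m) + (f - q n))) -> cauchy ip q.
Proof.
move=> d0 q_near q_mid e e0; have one_gt0 : (0 : R) < 1 := ltr01.
pose t := e ^+ 2 / (8 * d + 4).
have t0 : 0 < t by rewrite divr_gt0 ?exprn_gt0 //; lra.
have [K1 hK1] := geom_small one_gt0 t0; have [K2 hK2] := geom_small one_gt0 one_gt0.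
exists (maxn K1 K2) => m n; rewrite !geq_max => /andP[m1 m2] /andP[n1 n2].
have := parallelogram_near_min d0 (ltW (geom_gt0 m one_gt0)) (ltW (geom_gt0 n one_gt0))
  (ltW (q_near m)) (ltW (q_near n)) (q_mid m n).
have -> : f - q m - (f - q n) = q n - q m by rewrite opprB addrC addrA subrK.
move=> par; rewrite (hdistC ip_inner (q m)) -(ltr_pXn2r (_ : (0 < 2)%N)) ?nnegrE ?hnorm_ge0 ?ltW //.
have : t * (8 * d + 4) = e ^+ 2 by rewrite divfK // lt0r_neq0 //; lra.
have x1t := hK1 m m1; have x2t := hK1 n n1.
have x1_gt0 := geom_gt0 m one_gt0; have x2_gt0 := geom_gt0 n one_gt0.
have : geom (1 : R) m ^+ 2 <= geom 1 m by rewrite expr2 ger_pMl // ltW // hK2.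
have : geom (1 : R) n ^+ 2 <= geom 1 n by rewrite expr2 ger_pMl // ltW // hK2.
have : 4 * d * (geom 1 m + geom 1 n) <= 4 * d * (2 * t).
  by rewrite ler_wpM2l ?mulr_ge0 //; lra.
lra.
Qed.

Lemma closed_subspace_nearest (S : V -> Prop) : subspace S ->
  (forall u x, (forall k, S (u k)) -> converges ip u x -> S x) ->
  forall f, exists2 p, S p & forall q, S q -> N (f - p) <= N (f - q).
Proof.
move=> [S0 S_lin] S_closed f.
have one_gt0 : (0 : R) < 1 := ltr01.
have SD x y : S x -> S y -> S (x + y) by move=> Sx Sy; rewrite -[x]scale1r; exact: S_lin.
have SZ a x : S x -> S (a *: x) by rewrite -[_ *: _]addr0 => Sx; exact: S_lin Sx S0.
pose E : set R := fun t => exists2 q, S q & t = N (f - q).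
have E_inf : has_inf E.
  by split; [exists (N (f - 0)), 0 | exists 0 => _ [q _ ->]; exact: hnorm_ge0].
have d0 : 0 <= inf E by apply: lb_le_inf E_inf.1 _ => _ [q _ ->]; exact: hnorm_ge0.
have d_le q : S q -> inf E <= N (f - q) by move=> Sq; apply: ge_inf E_inf.2 _ _; exists q.
set d := inf E in d0 d_le *.
have near_inf k : exists p, S p /\ N (f - p) < d + geom 1 k.
  by have [_ [p Sp ->] ?] := inf_adherent (geom_gt0 k one_gt0) E_inf; exists p.
have [q hq] := choice near_inf.
have cau : cauchy ip q.
  apply: (cauchy_near_min d0 (fun k => (hq k).2)) => m n.
  have -> : (f - q m) + (f - q n) = 2%:R *: (f - 2%:R^-1 *: (q m + q n)).
    rewrite scalerBr scalerA divff ?pnatr_eq0 // scale1r scaler_nat mulr2n.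
    by rewrite opprD addrACA.
  rewrite hnorm2Z ler_pM2l ?ltr0n //; apply/d_le/SZ/SD; [exact: (hq m).1 | exact: (hq n).1].
have [p qp] := ip_hilbert.2 q cau.
have Sp : S p by apply: S_closed qp => k; case: (hq k).
exists p => // r Sr; apply: le_trans (d_le r Sr); apply/ler_addgt0Pr => e e0.
have e2 : 0 < e / 2 by rewrite divr_gt0.
have [K1 hK1] := qp _ e2; have [K2 hK2] := geom_small one_gt0 e2.
have := hK1 _ (leq_maxl K1 K2); have := hK2 _ (leq_maxr K1 K2).
have := ler_hdist ip_inner f (q (maxn K1 K2)) p; have [_ +] := hq (maxn K1 K2).
lra.
Qed.

Lemma nearest_orthogonal (S : V -> Prop) f p : subspace S -> S p ->
  (forall q, S q -> N (f - p) <= N (f - q)) -> forall q, S q -> ip (f - p) q = 0.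
Proof.
move=> [S0 S_lin] Sp p_min q Sq.
have [/(ipxx_eq0 ip_inner) ->|nz] := eqVneq (ip q q) 0; first exact: (ip0r ip_inner).
have qq_gt0 : 0 < ip q q by rewrite lt_def nz (ipxx_ge0 ip_inner).
have := ler_ipxx ip_inner (p_min _ (S_lin (ip (f - p) q / ip q q) _ _ Sq Sp)).
rewrite [_ + p]addrC opprD addrA (ipxx_sub_proj ip_inner) // lerBrDr gerDl pmulr_lle0 ?invr_gt0 // => h.
have /eqP : `|ip (f - p) q| ^+ 2 = 0 by apply/eqP; rewrite eq_le h exprn_ge0.
by rewrite expf_eq0 /= normr_eq0 => /eqP.
Qed.

Lemma riesz_representation (l : V -> R[i]) (c : R) :
  (forall a x y, l (a *: x + y) = a * l x + l y) ->
  (forall x, normc (l x) <= c * N x) ->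
  exists z, forall f, l f = ip f z.
Proof.
move=> l_lin l_bd.
have l0 : l 0 = 0.
  have := l_lin 1 0 0; rewrite scaler0 addr0 mul1r => l00.
  by apply: (@addrI _ (l 0)); rewrite addr0 -l00.
have lZ a x : l (a *: x) = a * l x by rewrite -[a *: x]addr0 l_lin l0 addr0.
have lB x y : l (x - y) = l x - l y by rewrite -scaleN1r addrC l_lin mulN1r addrC.
pose S q := l q = 0.
have S_sub : subspace S by split=> // a x y; rewrite /S l_lin => -> ->; rewrite mulr0 addr0.
have [l_eq0|/existsNP[f1 /eqP f1n]] := pselect (forall f, l f = 0).
  by exists 0 => f; rewrite l_eq0 (ip0r ip_inner).
have S_closed u x : (forall k, S (u k)) -> converges ip u x -> S x.
  move=> Su ux; apply: ComplexField.Normc.eq0_normc; apply/eqP; rewrite eq_le normc_ge0 andbT.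
  apply: (@ler0_forall_gt0M _ _ (Num.max c 0)) => e e0.
  have [K hK] := ux e e0; have := l_bd (u K - x); rewrite lB Su sub0r normcN => lx.
  apply: (le_trans lx); apply: (@le_trans _ _ (Num.max c 0 * N (u K - x))).
    by rewrite ler_wpM2r ?hnorm_ge0 // le_max lexx.
  by rewrite mulrC ler_wpM2r ?le_max ?lexx ?orbT // ltW // hK.
have [p Sp p_min] := closed_subspace_nearest S_sub S_closed ((l f1)^-1 *: f1).
pose e := (l f1)^-1 *: f1 - p.
have le : l e = 1 by rewrite lB Sp subr0 lZ mulVf.
have ee : ip e e != 0.
  by apply: contra_eqN le => /eqP/(ipxx_eq0 ip_inner) ->; rewrite l0 eq_sym oner_neq0.
exists ((ip e e)^-1 *: e) => f.
have Sf : S (f - l f *: e) by rewrite /S lB lZ le mulr1 subrr.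
have /eqP := nearest_orthogonal S_sub Sp p_min Sf.
rewrite (ipBr ip_inner) (ipZr ip_inner) subr_eq0 => /eqP ef.
rewrite (ipZr ip_inner) (ipC ip_inner f e) ef !rmorphM fmorphV /= conjcK.
rewrite (ger0_conjc (ipxx_ge0 ip_inner e)).
by rewrite mulrCA mulVf ?mulr1.
Qed.

End Riesz.

Definition closed_graph (R : realType) (V W : lmodType R[i])
    (ipV : V -> V -> R[i]) (ipW : W -> W -> R[i]) (F : V -> W) : Prop :=
  forall f y, (forall e, 0 < e ->
    exists f', hnorm ipV (f - f') < e /\ hnorm ipW (y - F f') < e) -> F f = y.

Section ClosedGraph.
Variables (R : realType) (V W : lmodType R[i]).
Variables (ipV : V -> V -> R[i]) (ipW : W -> W -> R[i]).
Hypotheses (V_hilbert : hilbert ipV) (W_hilbert : hilbert ipW).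
Let V_inner : inner_product ipV := V_hilbert.1.
Let W_inner : inner_product ipW := W_hilbert.1.
Variable F : {linear V -> W}.
Local Notation NV := (hnorm ipV).
Local Notation NW := (hnorm ipW).

Lemma baire_bounded_near0 : exists c r : R, [/\ 0 <= c, 0 < r &
  forall f, NV f < r -> forall e, 0 < e -> exists g, NW (F g) <= c /\ NV (f - g) < e].
Proof.
have cover f : exists n, NW (F f) <= n%:R.
  by exists (Num.Def.archi_bound (NW (F f))); exact/ltW/archi_boundP/hnorm_ge0.
have [n [f0 [r [r0 dense]]]] := baire_category V_hilbert cover.
exists (n%:R + n%:R), r; split=> // [|f fr e e0]; first by rewrite addr_ge0.
have e2 : 0 < e / 2 by rewrite divr_gt0.
have [g1 [g1n g1f]] : exists g, NW (F g) <= n%:R /\ NV (f0 + f - g) < e / 2.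
  by apply: dense e2; rewrite addrAC subrr add0r.
have [g2 [g2n g2f]] : exists g, NW (F g) <= n%:R /\ NV (f0 - g) < e / 2.
  by apply: dense e2; rewrite subrr (hnorm0 V_inner).
exists (g1 - g2); split.
  by rewrite linearB; apply: le_trans (ler_hnormB W_inner _ _) _; exact: lerD.
have -> : f - (g1 - g2) = (f0 + f - g1) - (f0 - g2).
  by rewrite [f0 + f]addrC addrAC addrKA opprK opprB [g2 - g1]addrC addrA addrAC.
by apply: le_lt_trans (ler_hnormB V_inner _ _) _; lra.
Qed.

Lemma approx_bounded : exists2 M : R, 0 <= M &
  forall f e, 0 < e -> exists g, NW (F g) <= M * NV f /\ NV (f - g) < e.
Proof.
have [c [r [c0 r0 near0]]] := baire_bounded_near0.
exists (2 * c / r) => [|f e e0]; first by rewrite divr_ge0 ?mulr_ge0 // ltW.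
have [->|f_neq0] := eqVneq f 0.
  by exists 0; rewrite linear0 subrr (hnorm0 V_inner) (hnorm0 W_inner) mulr0.
have Nf_gt0 : 0 < NV f.
  by rewrite lt_def hnorm_ge0 andbT; apply: contra_neq f_neq0 => /(hnorm_eq0 V_inner).
pose lam := r / (2 * NV f).
have lam_gt0 : 0 < lam by rewrite divr_gt0 // mulr_gt0.
have lamf : NV (lam%:C%C *: f) < r.
  rewrite hnormZ_ge0 ?ltW //.
  have -> : lam * NV f = r / 2 by rewrite /lam; field; rewrite gt_eqF.
  lra.
have [g [gc gf]] := near0 _ lamf (lam * e) (mulr_gt0 lam_gt0 e0).
have lamV_ge0 : 0 <= lam^-1 by rewrite invr_ge0 ltW.
exists ((lam^-1)%:C%C *: g); split.
  rewrite linearZ /= (hnormZ_ge0 W_inner _ lamV_ge0).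
  have -> : 2 * c / r * NV f = lam^-1 * c by rewrite /lam; field; rewrite !gt_eqF.
  by rewrite ler_wpM2l.
have -> : f - (lam^-1)%:C%C *: g = (lam^-1)%:C%C *: (lam%:C%C *: f - g).
  by rewrite scalerBr scalerA -rmorphM /= mulVf ?gt_eqF // scale1r.
rewrite (hnormZ_ge0 V_inner _ lamV_ge0) -(ltr_pM2l lam_gt0) mulrA mulfV ?gt_eqF //.
by rewrite mul1r.
Qed.

Hypothesis F_closed : closed_graph ipV ipW F.

Lemma closed_graph_approx_bounded (M : R) : 0 <= M ->
  (forall f e, 0 < e -> exists g, NW (F g) <= M * NV f /\ NV (f - g) < e) ->
  forall f, NW (F f) <= M * NV f.
Proof.
(* The residuals res k tend to 0, so f is the sum of the approximants g (k, res k);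
   their images form a Cauchy series in W, whose sum is F f by closedness of the graph. *)
move=> M0 approx f; apply/ler_addgt0Pr => e e0.
pose eta := e / (M + 1).
have eta_gt0 : 0 < eta by rewrite divr_gt0 //; lra.
have pick (kx : nat * V) : exists g, NW (F g) <= M * NV kx.2 /\ NV (kx.2 - g) < geom eta kx.1.+1.
  exact: approx (geom_gt0 _ eta_gt0).
have [g hg] := choice pick.
pose res := fix res k := if k is k'.+1 then res k' - g (k', res k') else f.
have res_small k : NV (res k.+1) < geom eta k.+1 by case: (hg (k, res k)).
pose u k := F (f - res k.+1).
have a_gt0 : 0 < (M + 1) * eta / 2 by rewrite divr_gt0 // mulr_gt0 //; lra.
have u_incr j : NW (u j.+1 - u j) <= geom ((M + 1) * eta / 2) j.
  have -> : u j.+1 - u j = F (g (j.+1, res j.+1)).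
    have shift (x a b : V) : (x - (a - b)) - (x - a) = b.
      by rewrite opprB [x + _]addrC addrKA opprK subrK.
    by rewrite -linearB /= shift.
  apply: le_trans (proj1 (hg (j.+1, res j.+1))) _.
  apply: le_trans (ler_wpM2l M0 (ltW (res_small j))) _.
  have -> : geom ((M + 1) * eta / 2) j = (M + 1) * geom eta j.+1.
    by rewrite geomS /geom; field; rewrite pnatr_eq0 expn_eq0.
  by rewrite ler_wpM2r ?lerDl // ltW // geom_gt0.
have [y uy] := W_hilbert.2 u (cauchy_geom_increments W_inner u_incr a_gt0).
have -> : F f = y.
  apply: F_closed => t t0; have [K1 hK1] := uy t t0.
  have [K2 hK2] := geom_small eta_gt0 t0.
  exists (f - res (maxn K1 K2).+1); split.
    rewrite opprB addrC subrK; apply: lt_trans (res_small _) (hK2 _ _).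
    exact: leq_trans (leq_maxr _ _) (leqnSn _).
  by rewrite hdistC //; apply: hK1 (leq_maxl _ _).
have u0 : NW (u 0%N) <= M * NV f.
  by rewrite /u /= opprB addrC subrK; case: (hg (0%N, f)).
apply/ler_addgt0Pr => t t0; have [K hK] := uy t t0.
have := hdist_geom_increments W_inner u_incr 0 K; rewrite add0n geom0.
have := hK K (leqnn K); have := ler_hdist W_inner y (u K) 0.
have := ler_hdist W_inner (u K) (u 0%N) 0; rewrite !subr0 (hdistC W_inner y).
have := geom_gt0 K a_gt0.
have : M * eta + eta = e by rewrite /eta -[X in _ + X]mul1r -mulrDl mulrC divfK // gt_eqF //; lra.
lra.
Qed.

Lemma closed_graph_bounded : exists2 M : R, 0 <= M & forall f, NW (F f) <= M * NV f.
Proof.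
have [M M0 approx] := approx_bounded.
by exists M => //; exact: closed_graph_approx_bounded.
Qed.

End ClosedGraph.

Lemma antidual0 (R : realType) (K : lmodType R[i]) (ipK : K -> K -> R[i]) phi :
  antidual ipK phi -> phi 0 = 0.
Proof.
move=> [phi_lin _]; have := phi_lin 1 0 0; rewrite scaler0 addr0 rmorph1 mul1r => h.
by apply: (@addrI _ (phi 0)); rewrite addr0 -h.
Qed.

Section Adjoint.
Variables (R : realType) (V : lmodType R[i]) (ip : V -> V -> R[i]).
Hypothesis ip_inner : inner_product ip.
Variables (D : V -> Prop) (f : V -> V) (Ds : V -> Prop) (fs : V -> V).
Hypothesis fs_adjoint : is_adjoint ip D f Ds fs.

Lemma adjointP v u : Ds v -> D u -> ip (f u) v = ip u (fs v).
Proof. by move=> Dv; apply: (fs_adjoint v (fs v)).1. Qed.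

Lemma adjoint_linear a v v' : Ds v -> Ds v' ->
  Ds (a *: v + v') /\ fs (a *: v + v') = a *: fs v + fs v'.
Proof.
move=> Dv Dv'; apply/fs_adjoint => u Du.
by rewrite !(ipDr ip_inner) !(ipZr ip_inner) !adjointP.
Qed.

Lemma adjointB v v' : Ds v -> Ds v' -> Ds (v - v') /\ fs (v - v') = fs v - fs v'.
Proof.
move=> Dv Dv'; have [] := adjoint_linear (-1) Dv' Dv.
by rewrite !scaleN1r ![- _ + _]addrC.
Qed.

Lemma symmetric_sub_adjoint : symmetric_op ip D f -> op_ext D f Ds fs.
Proof. by move=> f_sym u Du; apply/fs_adjoint => v Dv; exact: f_sym. Qed.

End Adjoint.

Section GraphNorm.
Variables (R : realType) (V : lmodType R[i]) (ip : V -> V -> R[i]) (f : V -> V).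

Lemma graph_norm_ge0 u : 0 <= graph_norm ip f u.
Proof. exact: sqrtr_ge0. Qed.

Lemma ler_sqrtD_sqr (a b : R) : 0 <= a -> a <= Num.sqrt (a ^+ 2 + b ^+ 2).
Proof.
by move=> a0; rewrite -{1}(ger0_norm a0) -sqrtr_sqr ler_wsqrtr // lerDl sqr_ge0.
Qed.

Lemma hnorm_le_graph_norm u : hnorm ip u <= graph_norm ip f u.
Proof. exact/ler_sqrtD_sqr/hnorm_ge0. Qed.

Lemma hnorm_op_le_graph_norm u : hnorm ip (f u) <= graph_norm ip f u.
Proof. by rewrite /graph_norm addrC; exact/ler_sqrtD_sqr/hnorm_ge0. Qed.

Lemma graph_dense_vanish (W : lmodType R[i]) (Ds : V -> Prop) (i : W -> V)
    (L : V -> R[i]) (c : R) :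
  (forall u h, Ds u -> Ds (u - i h) /\ L (u - i h) = L u - L (i h)) ->
  (forall h, L (i h) = 0) ->
  (forall u, Ds u -> normc (L u) <= c * graph_norm ip f u) ->
  (forall u, Ds u -> forall e, 0 < e -> exists h, graph_norm ip f (u - i h) < e) ->
  forall u, Ds u -> L u = 0.
Proof.
move=> LB L0 L_bd dense u Du; apply: ComplexField.Normc.eq0_normc; apply/eqP.
rewrite eq_le normc_ge0 andbT; apply: (@ler0_forall_gt0M _ _ (Num.max c 0)) => e e0.
have [h he] := dense u Du e e0; have [Dh Lh] := LB u h Du.
have -> : L u = L (u - i h) by rewrite Lh L0 subr0.
apply: le_trans (L_bd _ Dh) _; apply: (@le_trans _ _ (Num.max c 0 * graph_norm ip f (u - i h))).
  by rewrite ler_wpM2r ?graph_norm_ge0 // le_max lexx.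
by rewrite mulrC ler_wpM2r ?le_max ?lexx ?orbT // ltW.
Qed.

End GraphNorm.

Lemma bounded_map_ge0 (R : realType) (V W : lmodType R[i])
    (ipV : V -> V -> R[i]) (ipW : W -> W -> R[i]) (f : V -> W) :
  bounded_map ipV ipW f -> exists2 c, 0 <= c & forall x, hnorm ipW (f x) <= c * hnorm ipV x.
Proof.
move=> [c hc]; exists (Num.max c 0) => [|x]; first by rewrite le_max lexx orbT.
by apply: le_trans (hc x) _; rewrite ler_wpM2r ?hnorm_ge0 // le_max lexx.
Qed.

Section BoundaryProblem.
Variables (R : realType) (H0 H1 Kd K : lmodType R[i]).
Variables (ip0 : H0 -> H0 -> R[i]) (ipd : Kd -> Kd -> R[i]) (ipK : K -> K -> R[i]).
Hypotheses (hH0 : hilbert ip0) (hKd : hilbert ipd) (hK : hilbert ipK).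
Let inner0 : inner_product ip0 := hH0.1.
Let innerd : inner_product ipd := hKd.1.
Local Notation N0 := (hnorm ip0).
Local Notation Nd := (hnorm ipd).
Local Notation NK := (hnorm ipK).
Variables (i1 : {linear H1 -> H0}) (iK : {linear K -> Kd}).
Hypotheses (iK_inj : injective iK) (iK_bd : bounded_map ipK ipd iK).
Variables (DT : H0 -> Prop) (Tf : H0 -> H0) (DTs : H0 -> Prop) (Tsf : H0 -> H0).
Hypotheses (T_sym : symmetric_op ip0 DT Tf) (Ts_adj : is_adjoint ip0 DT Tf DTs Tsf).
Hypothesis H1_sub : forall h, DTs (i1 h).
Hypothesis H1_dense_graph : forall u, DTs u -> forall e : R, 0 < e ->
  exists h, graph_norm ip0 Tsf (u - i1 h) < e.
Variables (g0 g1 : {linear H1 -> K}).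
Hypothesis g_surj : forall a b : K, exists h, g0 h = a /\ g1 h = b.
Hypothesis DT_kerg : forall f, DT f <-> exists h, [/\ g0 h = 0, g1 h = 0 & f = i1 h].
Hypothesis lagrange : forall h g : H1,
  ip0 (Tsf (i1 h)) (i1 g) - ip0 (i1 h) (Tsf (i1 g)) =
  ipd (iK (g1 h)) (iK (g0 g)) - ipd (iK (g0 h)) (iK (g1 g)).
Variables (G0 G1 : H0 -> K -> R[i]).
Hypothesis G1_val : forall u, DTs u -> antidual ipK (G1 u).
Hypotheses (G0_lin : forall (a : R[i]) u v x, DTs u -> DTs v ->
                       G0 (a *: u + v) x = a * G0 u x + G0 v x)
           (G1_lin : forall (a : R[i]) u v x, DTs u -> DTs v ->
                       G1 (a *: u + v) x = a * G1 u x + G1 v x).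
Hypotheses (G0_bd : exists c : R, forall u x, DTs u ->
                      normc (G0 u x) <= c * graph_norm ip0 Tsf u * NK x)
           (G1_bd : exists c : R, forall u x, DTs u ->
                      normc (G1 u x) <= c * graph_norm ip0 Tsf u * NK x).
Hypotheses (G0_ext : forall h x, G0 (i1 h) x = ipd (iK (g0 h)) (iK x))
           (G1_ext : forall h x, G1 (i1 h) x = ipd (iK (g1 h)) (iK x)).
(* [i1 \o Phi] is the inverse A^-1, lifted to Ker γ0 ⊆ H1. *)
Variable Phi : {linear H0 -> H1}.
Hypotheses (Phi_ker : forall f, g0 (Phi f) = 0)
           (Phi_right : forall f, Tsf (i1 (Phi f)) = f)
           (Phi_left : forall h, g0 h = 0 -> Phi (Tsf (i1 h)) = h)
           (Phi_bd : bounded_map ip0 ip0 (fun f => i1 (Phi f))).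

Lemma lagrange_Phi f h :
  ipd (iK (g1 (Phi f))) (iK (g0 h)) = ip0 f (i1 h) - ip0 (i1 (Phi f)) (Tsf (i1 h)).
Proof.
by have := lagrange (Phi f) h; rewrite Phi_ker linear0 (ip0l innerd) subr0 Phi_right.
Qed.

Lemma closed_graph_gamma1_Phi : closed_graph ip0 ipK (g1 \o Phi).
Proof.
move=> f y approx /=; have [cK cK0 iK_le] := bounded_map_ge0 iK_bd.
have [cB cB0 Phi_le] := bounded_map_ge0 Phi_bd.
suff perp w : ipd (iK (y - g1 (Phi f))) (iK (g0 w)) = 0.
  have [w [gw _]] := g_surj (y - g1 (Phi f)) 0.
  move: (perp w); rewrite gw => /(ipxx_eq0 innerd).
  by rewrite -(linear0 iK) => /iK_inj/eqP; rewrite subr_eq0 => /eqP <-.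
apply: ComplexField.Normc.eq0_normc; apply/eqP; rewrite eq_le normc_ge0 andbT.
apply: (@ler0_forall_gt0M _ _ (cK * Nd (iK (g0 w)) + N0 (i1 w) + cB * N0 (Tsf (i1 w)))).
move=> e e0; have [f' [ff' yf']] := approx e e0; rewrite /= in yf'.
have -> : ipd (iK (y - g1 (Phi f))) (iK (g0 w)) = ipd (iK (y - g1 (Phi f'))) (iK (g0 w))
    + (ip0 (f' - f) (i1 w) - ip0 (i1 (Phi (f' - f))) (Tsf (i1 w))).
  rewrite -lagrange_Phi -(ipDl innerd) -linearD; congr (ipd (iK _) _).
  by rewrite !linearB addrA subrK.
have t1 : normc (ipd (iK (y - g1 (Phi f'))) (iK (g0 w))) <= e * (cK * Nd (iK (g0 w))).
  apply: le_trans (normc_ip_le innerd _ _) _.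
  rewrite mulrA [e * cK]mulrC ler_wpM2r ?hnorm_ge0 //.
  by apply: le_trans (iK_le _) _; rewrite ler_wpM2l // ltW.
have t2 : normc (ip0 (f' - f) (i1 w)) <= e * N0 (i1 w).
  apply: le_trans (normc_ip_le inner0 _ _) _.
  by rewrite ler_wpM2r ?hnorm_ge0 // (hdistC inner0) ltW.
have t3 : normc (ip0 (i1 (Phi (f' - f))) (Tsf (i1 w))) <= e * (cB * N0 (Tsf (i1 w))).
  apply: le_trans (normc_ip_le inner0 _ _) _.
  rewrite mulrA [e * cB]mulrC ler_wpM2r ?hnorm_ge0 //.
  by apply: le_trans (Phi_le _) _; rewrite ler_wpM2l // (hdistC inner0) ltW.
have := le_normcD (ip0 (f' - f) (i1 w)) (- ip0 (i1 (Phi (f' - f))) (Tsf (i1 w))).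
have := le_normcD (ipd (iK (y - g1 (Phi f'))) (iK (g0 w)))
  (ip0 (f' - f) (i1 w) - ip0 (i1 (Phi (f' - f))) (Tsf (i1 w))).
rewrite normcN !mulrDr; lra.
Qed.

Lemma lagrange_ext u h : DTs u ->
  ip0 (Tsf u) (i1 h) - ip0 u (Tsf (i1 h)) = G1 u (g0 h) - G0 u (g1 h).
Proof.
move=> Du; apply/eqP; rewrite -subr_eq0; apply/eqP; move: u Du.
pose L u := ip0 (Tsf u) (i1 h) - ip0 u (Tsf (i1 h)) - (G1 u (g0 h) - G0 u (g1 h)).
have [c0 c0_bd] := G0_bd; have [c1 c1_bd] := G1_bd.
apply: (@graph_dense_vanish _ _ ip0 Tsf _ DTs i1 L
  (N0 (i1 h) + N0 (Tsf (i1 h)) + `|c1| * NK (g0 h) + `|c0| * NK (g1 h))) => //.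
- move=> u h' Du; have [Dv Tv] := adjointB inner0 Ts_adj Du (H1_sub h'); split=> //.
  have GB (G : H0 -> K -> R[i]) x : (forall (a : R[i]) u v x, DTs u -> DTs v ->
      G (a *: u + v) x = a * G u x + G v x) -> G (u - i1 h') x = G u x - G (i1 h') x.
    by move=> G_lin; rewrite -scaleN1r addrC G_lin ?H1_sub // mulN1r addrC.
  by rewrite /L Tv (GB _ _ G0_lin) (GB _ _ G1_lin) !(ipBl inner0); ring.
- by move=> h'; rewrite /L lagrange G0_ext G1_ext subrr.
move=> u Du; have gn0 := graph_norm_ge0 ip0 Tsf u.
have b1 : normc (ip0 (Tsf u) (i1 h)) <= N0 (i1 h) * graph_norm ip0 Tsf u.
  apply: le_trans (normc_ip_le inner0 _ _) _.
  by rewrite mulrC ler_wpM2l ?hnorm_ge0 ?hnorm_op_le_graph_norm.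
have b2 : normc (ip0 u (Tsf (i1 h))) <= N0 (Tsf (i1 h)) * graph_norm ip0 Tsf u.
  apply: le_trans (normc_ip_le inner0 _ _) _.
  by rewrite mulrC ler_wpM2l ?hnorm_ge0 ?hnorm_le_graph_norm.
have bG c G x : (forall u x, DTs u -> normc (G u x) <= c * graph_norm ip0 Tsf u * NK x) ->
    normc (G u x) <= `|c| * NK x * graph_norm ip0 Tsf u.
  move=> G_bd; apply: le_trans (G_bd u x Du) _.
  by rewrite mulrAC ler_wpM2r // ler_wpM2r ?hnorm_ge0 ?ler_norm.
have := bG _ _ (g0 h) c1_bd; have := bG _ _ (g1 h) c0_bd.
have := le_normcD (ip0 (Tsf u) (i1 h)) (- ip0 u (Tsf (i1 h))).
have := le_normcD (G1 u (g0 h)) (- G0 u (g1 h)).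
have := le_normcD (ip0 (Tsf u) (i1 h) - ip0 u (Tsf (i1 h))) (- (G1 u (g0 h) - G0 u (g1 h))).
rewrite /L !normcN !mulrDl; lra.
Qed.

Lemma ker_adjoint_G0_surj phi : antidual ipK phi ->
  exists z, [/\ DTs z, Tsf z = 0 & forall x, G0 z x = phi x].
Proof.
move=> phi_anti; have [phi_lin phi_bd] := phi_anti.
have [c c0 phi_le] : exists2 c, 0 <= c & forall x, normc (phi x) <= c * NK x.
  have [c hc] := phi_bd; exists (Num.max c 0) => [|x]; first by rewrite le_max lexx orbT.
  by apply: le_trans (hc x) _; rewrite ler_wpM2r ?hnorm_ge0 // le_max lexx.
have [M M0 Psi_le] := closed_graph_bounded hH0 hK closed_graph_gamma1_Phi.
pose l f := conjc (phi (g1 (Phi f))).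
have l_lin a x y : l (a *: x + y) = a * l x + l y.
  by rewrite /l !linearP phi_lin rmorphD rmorphM /= conjcK.
have l_bd x : normc (l x) <= c * M * N0 x.
  have -> : normc (l x) = normc (phi (g1 (Phi x))) by rewrite /l; case: (phi _) => a b /=; rewrite sqrrN.
  by apply: le_trans (phi_le _) _; rewrite -mulrA ler_wpM2l // Psi_le.
have [z hz] := riesz_representation hH0 l_lin l_bd.
have phi_Psi f : phi (g1 (Phi f)) = ip0 z f by rewrite (ipC inner0) -hz conjcK.
have Psi_Ts h : g0 h = 0 -> g1 (Phi (Tsf (i1 h))) = g1 h by move/Phi_left ->.
have [Dz Tz] : DTs z /\ Tsf z = 0.
  apply/Ts_adj => u Du; have [h [h0 h1 uh]] := (DT_kerg u).1 Du.
  have [_ <-] := symmetric_sub_adjoint Ts_adj T_sym Du.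
  by rewrite (ip0r inner0) (ipC inner0) -phi_Psi uh Psi_Ts // h1 (antidual0 phi_anti) rmorph0.
exists z; split=> // x; have [h [h0 h1]] := g_surj 0 x.
have := lagrange_ext h Dz; rewrite Tz (ip0l inner0) h0 (antidual0 (G1_val Dz)) !sub0r.
by rewrite -h1 => /oppr_inj <-; rewrite -phi_Psi Psi_Ts.
Qed.

Lemma ker_adjoint_G0_inj z : DTs z -> Tsf z = 0 -> (forall x, G0 z x = 0) -> z = 0.
Proof.
move=> Dz Tz G0z; apply: (ipxx_eq0 inner0).
have := lagrange_ext (Phi z) Dz.
rewrite Tz (ip0l inner0) Phi_ker G0z (antidual0 (G1_val Dz)) Phi_right subrr sub0r.
by move/eqP; rewrite oppr_eq0 => /eqP.
Qed.

End BoundaryProblem.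

Lemma reference_inverse_lift (R : realType) (H0 H1 K : lmodType R[i])
    (ip0 : H0 -> H0 -> R[i]) (i1 : {linear H1 -> H0}) (g0 : {linear H1 -> K})
    (DA : H0 -> Prop) (Af : H0 -> H0) (DTs : H0 -> Prop) (Tsf : H0 -> H0) :
  inner_product ip0 -> injective i1 -> is_adjoint ip0 DA Af DA Af ->
  op_ext DA Af DTs Tsf -> (forall f, DA f <-> exists h, g0 h = 0 /\ f = i1 h) ->
  (exists B : H0 -> H0, [/\ bounded_map ip0 ip0 B,
      (forall f, DA (B f) /\ Af (B f) = f) & (forall u, DA u -> B (Af u) = u)]) ->
  exists Phi : {linear H0 -> H1}, [/\ forall f, g0 (Phi f) = 0,
    forall f, Tsf (i1 (Phi f)) = f, forall h, g0 h = 0 -> Phi (Tsf (i1 h)) = h &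
    bounded_map ip0 ip0 (fun f => i1 (Phi f))].
Proof.
move=> inner0 i1_inj A_sa A_Ts DA_kerg0 [B [B_bd BA AB]].
have lift f : exists h, g0 h = 0 /\ B f = i1 h by apply/DA_kerg0; case: (BA f).
have [Phi hPhi] := choice lift.
have i1Phi f : i1 (Phi f) = B f by case: (hPhi f).
have TsB f : Tsf (B f) = f.
  by have [DBf ABf] := BA f; have [_ ->] := A_Ts _ DBf.
have Phi_lin a f g : Phi (a *: f + g) = a *: Phi f + Phi g.
  apply: i1_inj; rewrite linearP /= !i1Phi.
  have [DBf ABf] := BA f; have [DBg ABg] := BA g.
  have [DA_lin A_lin] := adjoint_linear inner0 A_sa a DBf DBg.
  by rewrite -{1}ABf -{1}ABg -A_lin AB.
pose PhiL : {linear H0 -> H1} := HB.pack Phi (GRing.isLinear.Build _ _ _ _ Phi Phi_lin).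
exists PhiL; split=> /=.
- by move=> f; case: (hPhi f).
- by move=> f; rewrite i1Phi TsB.
- move=> h h0; have Dh : DA (i1 h) by apply/DA_kerg0; exists h.
  by apply: i1_inj; have [_ ->] := A_Ts _ Dh; rewrite i1Phi AB.
- by have [c hc] := B_bd; exists c => f; rewrite i1Phi.
Qed.

Unset Implicit Arguments.

Theorem lemma4p9
  (R : realType)
  (* Kd is K^∂ *)
  (H0 H1 Kd K : lmodType R[i])
  (ip0 : H0 -> H0 -> R[i]) (ip1 : H1 -> H1 -> R[i])
  (ipd : Kd -> Kd -> R[i]) (ipK : K -> K -> R[i])
  (hH0 : hilbert ip0) (sH0 : separable ip0) (hH1 : hilbert ip1)
  (hKd : hilbert ipd) (sKd : separable ipd) (hK : hilbert ipK)
  (i1 : {linear H1 -> H0}) (i1_inj : injective i1)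
  (i1_bd : bounded_map ip1 ip0 i1)
  (i1_dense : dense_in ip0 (fun f => exists h, f = i1 h))
  (iK : {linear K -> Kd}) (iK_inj : injective iK)
  (iK_bd : bounded_map ipK ipd iK)
  (iK_dense : dense_in ipd (fun y => exists x, y = iK x))
  (DT : H0 -> Prop) (Tf : H0 -> H0)
  (T_sub : subspace DT) (T_lin : linear_on DT Tf) (T_dense : dense_in ip0 DT)
  (T_sym : symmetric_op ip0 DT Tf) (T_closed : closed_op ip0 DT Tf)
  (DTs : H0 -> Prop) (Tsf : H0 -> H0)
  (Ts_adj : is_adjoint ip0 DT Tf DTs Tsf)
  (H1_sub : forall h, DTs (i1 h))
  (H1_dense_graph : forall u, DTs u -> forall e : R, 0 < e ->
      exists h, graph_norm ip0 Tsf (u - i1 h) < e)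
  (Ts_H1_bd : bounded_map ip1 ip0 (fun h => Tsf (i1 h)))
  (g0 g1 : {linear H1 -> K})
  (g0_bd : bounded_map ip1 ipK g0) (g1_bd : bounded_map ip1 ipK g1)
  (g_surj : forall a b : K, exists h, g0 h = a /\ g1 h = b)
  (kerg_dense : dense_in ip0 (fun f => exists h, [/\ g0 h = 0, g1 h = 0 & f = i1 h]))
  (DT_kerg : forall f, DT f <-> exists h, [/\ g0 h = 0, g1 h = 0 & f = i1 h])
  (lagrange : forall h g : H1,
      ip0 (Tsf (i1 h)) (i1 g) - ip0 (i1 h) (Tsf (i1 g)) =
      ipd (iK (g1 h)) (iK (g0 g)) - ipd (iK (g0 h)) (iK (g1 g)))
  (* An element of K' is represented by the anti-linear functional K -> C it is. *)
  (G0 G1 : H0 -> K -> R[i])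
  (G0_val : forall u, DTs u -> antidual ipK (G0 u))
  (G1_val : forall u, DTs u -> antidual ipK (G1 u))
  (G0_lin : forall (a : R[i]) u v x, DTs u -> DTs v ->
      G0 (a *: u + v) x = a * G0 u x + G0 v x)
  (G1_lin : forall (a : R[i]) u v x, DTs u -> DTs v ->
      G1 (a *: u + v) x = a * G1 u x + G1 v x)
  (G0_bd : exists c : R, forall u x, DTs u ->
      ComplexField.Normc.normc (G0 u x) <= c * graph_norm ip0 Tsf u * hnorm ipK x)
  (G1_bd : exists c : R, forall u x, DTs u ->
      ComplexField.Normc.normc (G1 u x) <= c * graph_norm ip0 Tsf u * hnorm ipK x)
  (G0_ext : forall h x, G0 (i1 h) x = ipd (iK (g0 h)) (iK x))
  (G1_ext : forall h x, G1 (i1 h) x = ipd (iK (g1 h)) (iK x))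
  (DA : H0 -> Prop) (Af : H0 -> H0)
  (A_dense : dense_in ip0 DA) (A_sa : is_adjoint ip0 DA Af DA Af)
  (T_A : op_ext DT Tf DA Af) (A_Ts : op_ext DA Af DTs Tsf)
  (DA_kerg0 : forall f, DA f <-> exists h, g0 h = 0 /\ f = i1 h)
  (A_inv : exists B : H0 -> H0, [/\ bounded_map ip0 ip0 B,
      (forall f, DA (B f) /\ Af (B f) = f) &
      (forall u, DA u -> B (Af u) = u)]) :
  (* bold Γ1 u = Γ1 u - M(0) Γ0 u = Γ1 u - Γ1 z, where z ∈ Ker T^* and Γ0 z = Γ0 u *)
  forall (phi : K -> R[i]), antidual ipK phi -> forall psi : K,
    exists u, [/\ DTs u,
      (forall x, G0 u x = phi x),
      (exists z, [/\ DTs z, Tsf z = 0 & forall x, G0 z x = G0 u x]) &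
      (forall z, DTs z -> Tsf z = 0 -> (forall x, G0 z x = G0 u x) ->
         forall x, G1 u x - G1 z x = ipd (iK psi) (iK x))].
Proof.
move=> phi phi_anti psi; have inner0 := hH0.1.
have [Phi [Phi_ker Phi_right Phi_left Phi_bd]] :=
  reference_inverse_lift inner0 i1_inj A_sa A_Ts DA_kerg0 A_inv.
have [z [Dz Tz G0z]] := ker_adjoint_G0_surj hH0 hKd hK iK_inj iK_bd T_sym Ts_adj
  H1_sub H1_dense_graph g_surj DT_kerg lagrange G1_val G0_lin G1_lin G0_bd G1_bd
  G0_ext G1_ext Phi_ker Phi_right Phi_left Phi_bd phi_anti.
have [h [h0 h1]] := g_surj 0 psi.
have [Du _] := adjoint_linear inner0 Ts_adj 1 Dz (H1_sub h); rewrite scale1r in Du.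
have G0u x : G0 (z + i1 h) x = phi x.
  have := G0_lin 1 z (i1 h) x Dz (H1_sub h); rewrite scale1r mul1r G0_ext h0 linear0.
  by rewrite (ip0l hKd.1) addr0 G0z.
have G1u x : G1 (z + i1 h) x = G1 z x + ipd (iK psi) (iK x).
  by have := G1_lin 1 z (i1 h) x Dz (H1_sub h); rewrite scale1r mul1r G1_ext h1.
exists (z + i1 h); split=> //; first by exists z; split=> // x; rewrite G0u G0z.
move=> z' Dz' Tz' G0z' x; suff -> : z' = z by rewrite G1u addrAC subrr add0r.
have [DB TB] := adjointB inner0 Ts_adj Dz' Dz.
apply/eqP; rewrite -subr_eq0; apply/eqP.
apply: (ker_adjoint_G0_inj hH0 Ts_adj H1_sub H1_dense_graph lagrange G1_val
  G0_lin G1_lin G0_bd G1_bd G0_ext G1_ext Phi_ker Phi_right DB).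
  by rewrite TB Tz' Tz subrr.
move=> y; have := G0_lin (-1) z z' y Dz Dz'.
by rewrite scaleN1r addrC => ->; rewrite G0z' G0u G0z mulN1r addNr.
Qed.
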